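(* For every $M\in\Lambda^{001}$ the following are equivalent: (1) $M$ is solvable in $\Lambda^{001}$; (2) $M$ is head-normalisable, i.e. $M\longrightarrow_h^* N$ for some $N$ in head normal form; (3) $M$ is solvable in $\Lambda$.
   Context: $\Lambda^{001}$ is the set of possibly infinite λ-terms (trees of variables, abstractions and applications $(M)N$) whose infinite branches all enter infinitely often the argument position $N$ of an application, up to α-equivalence; $\Lambda\subseteq\Lambda^{001}$ is the set of finite λ-terms. $\longrightarrow_\beta$ is one-step β-reduction (contextual closure of $(\lambda x.M)N\to M[N/x]$), $\longrightarrow_\beta^*$ its reflexive-transitive closure. The infinitary reduction $\longrightarrow_\beta^\infty$ is defined by the rules below, with possibly infinite derivations in which every infinite branch passes infinitely often through the third premise of (@): (var) $M\longrightarrow_\beta^* x\Rightarrow M\longrightarrow_\beta^\infty x$; (λ) $M\longrightarrow_\beta^*\lambda x.P$, $P\longrightarrow_\beta^\infty P'$ $\Rightarrow M\longrightarrow_\beta^\infty\lambda x.P'$; (@) $M\longrightarrow_\beta^*(P)Q$, $P\longrightarrow_\beta^\infty P'$, $Q\longrightarrow_\beta^\infty Q'$ $\Rightarrow M\longrightarrow_\beta^\infty(P')Q'$. Head normal forms are terms $\lambda x_1\dots\lambda x_m.(\dots((y)Q_1)\dots)Q_n$; head reduction $\longrightarrow_h$ contracts the redex $(\lambda z.N)P$ of a term $\lambda x_1\dots\lambda x_m.(\dots((\lambda z.N)P)Q_1\dots)Q_n$. A term $M\in\Lambda^{001}$ is solvable in $\Lambda$ (resp. in $\Lambda^{001}$)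 if there exist variables $x_1,\dots,x_m$ and terms $N_1,\dots,N_n\in\Lambda$ (resp. $\in\Lambda^{001}$) such that $(\dots((\lambda x_1\dots\lambda x_m.M)N_1)\dots)N_n\longrightarrow_\beta^*\lambda x.x$ (resp. $\longrightarrow_\beta^\infty\lambda x.x$). *)

(* Possibly infinite lambda-terms as a coinductive type with
   de Bruijn indices (so alpha-equivalence is built in); free variables are
   the indices that escape all binders and play the role of variable names. *)
From Stdlib Require Import Arith List Relations.
Import ListNotations.

CoInductive term : Type :=
| Var (n : nat)
| Lam (t : term)
| App (t u : term).

CoInductive bisim : term -> term -> Prop :=
| bis_var n : bisim (Var n) (Var n)
| bis_lam t t' : bisim t t' -> bisim (Lam t) (Lam t')
| bis_app t u t' u' : bisim t t' -> bisim u u' -> bisim (App t u) (App t' u').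

Definition up (f : nat -> nat) (n : nat) : nat :=
  match n with 0 => 0 | S k => S (f k) end.

CoFixpoint ren (f : nat -> nat) (t : term) : term :=
  match t with
  | Var n => Var (f n)
  | Lam b => Lam (ren (up f) b)
  | App a b => App (ren f a) (ren f b)
  end.

(* subst k N t : replace index k by N (N lives in the context of t), and
   decrement indices above k. *)
CoFixpoint subst (k : nat) (N : term) (t : term) : term :=
  match t with
  | Var n => if n <? k then Var n else if n =? k then N else Var (pred n)
  | Lam b => Lam (subst (S k) (ren S N) b)
  | App a b => App (subst k N a) (subst k N b)
  end.

(* Lambda^{001}: every infinite branch enters the argument position of an
   application infinitely often, i.e. the greatest P such that each term of P
   has a finite "spine" (through lambda-bodies and function positions) whose
   argument subterms are again in P. *)
Inductive spine001 (P : term -> Prop) : term -> Prop :=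
| s_var n : spine001 P (Var n)
| s_lam t : spine001 P t -> spine001 P (Lam t)
| s_app t u : spine001 P t -> P u -> spine001 P (App t u).

Definition in001 (t : term) : Prop :=
  exists P : term -> Prop, (forall u, P u -> spine001 P u) /\ P t.

Inductive finite_term : term -> Prop :=
| f_var n : finite_term (Var n)
| f_lam t : finite_term t -> finite_term (Lam t)
| f_app t u : finite_term t -> finite_term u -> finite_term (App t u).

Inductive bstep : term -> term -> Prop :=
| b_beta M N : bstep (App (Lam M) N) (subst 0 N M)
| b_lam M M' : bstep M M' -> bstep (Lam M) (Lam M')
| b_appl M M' N : bstep M M' -> bstep (App M N) (App M' N)
| b_appr M N N' : bstep N N' -> bstep (App M N) (App M N').

(* Reflexive-transitive closure, up to bisimilarity (= syntactic identity). *)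
Definition red_star : term -> term -> Prop :=
  clos_refl_trans term (fun a b => bstep a b \/ bisim a b).

(* Infinitary reduction: rules (var), (lambda), (@) with possibly infinite
   derivations, every infinite branch passing infinitely often through the
   third premise of (@).  inf_step R is the inductive part (finitely many
   (lambda)- and first-premise-(@) steps), R the coinductive hypothesis used
   only at the third premise of (@). *)
Inductive inf_step (R : term -> term -> Prop) : term -> term -> Prop :=
| i_var M x : red_star M (Var x) -> inf_step R M (Var x)
| i_lam M P P' : red_star M (Lam P) -> inf_step R P P' -> inf_step R M (Lam P')
| i_app M P Q P' Q' :
    red_star M (App P Q) -> inf_step R P P' -> R Q Q' ->
    inf_step R M (App P' Q').

Definition inf_red (M N : term) : Prop :=
  exists R : term -> term -> Prop,
    (forall a b, R a b -> inf_step R a b) /\ R M N.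

Inductive hstep : term -> term -> Prop :=
| h_beta M N : hstep (App (Lam M) N) (subst 0 N M)
| h_lam M M' : hstep M M' -> hstep (Lam M) (Lam M')
| h_app M M' N : hstep M M' -> (forall b, M <> Lam b) -> hstep (App M N) (App M' N).

Definition hred_star : term -> term -> Prop :=
  clos_refl_trans term (fun a b => hstep a b \/ bisim a b).

Inductive head_var : term -> Prop :=
| hv_var n : head_var (Var n)
| hv_app t u : head_var t -> head_var (App t u).

Inductive hnf : term -> Prop :=
| hnf_hv t : head_var t -> hnf t
| hnf_lam t : hnf t -> hnf (Lam t).

Definition head_normalisable (M : term) : Prop :=
  exists N, hred_star M N /\ hnf N.

Definition abs (x : nat) (M : term) : term :=
  Lam (ren (fun n => if n =? x then 0 else S n) M).

Definition abs_list (xs : list nat) (M : term) : term := fold_right abs M xs.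

Definition apps (M : term) (Ns : list term) : term :=
  fold_left (fun acc N => App acc N) Ns M.

Definition ident : term := Lam (Var 0).

Definition solvable_fin (M : term) : Prop :=
  exists (xs : list nat) (Ns : list term),
    Forall finite_term Ns /\ red_star (apps (abs_list xs M) Ns) ident.

Definition solvable_001 (M : term) : Prop :=
  exists (xs : list nat) (Ns : list term),
    Forall in001 Ns /\ inf_red (apps (abs_list xs M) Ns) ident.

(* A head normal form \x1..\xm.(y)Q1..Qn is solved by abstracting y if it
   is free and then feeding every abstraction the finite "eraser"
   \z1..\zn.\x.x: the head variable becomes an eraser, which swallows the
   n arguments.  Solvability in Lambda implies solvability in
   Lambda^001, and an infinitary reduction to the finite term \x.x is finite.
   It remains to see that (\x1..\xm.M)N1..Nk ->* \x.x forces M to be head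
   normalisable.  Use non-idempotent intersection types with derivation sizes:
   \x.x is typable, typability is stable under beta-expansion, a typing of
   (\xs.M)Ns contains a typing of M, and a head step strictly decreases the
   size of a typing (the argument's derivations are used once each), so typed
   terms head normalise. *)

From Stdlib Require Import Arith List Relations Lia.
Import ListNotations.

(** * Renaming, substitution and reduction *)

Definition term_unfold (t : term) : term :=
  match t with Var n => Var n | Lam b => Lam b | App a b => App a b end.

Lemma term_unfold_eq t : t = term_unfold t.
Proof. destruct t; reflexivity. Qed.

Lemma ren_var f n : ren f (Var n) = Var (f n).
Proof. rewrite (term_unfold_eq (ren f (Var n))). reflexivity. Qed.

Lemma ren_lam f b : ren f (Lam b) = Lam (ren (up f) b).
Proof. rewrite (term_unfold_eq (ren f (Lam b))). reflexivity. Qed.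

Lemma ren_app f a b : ren f (App a b) = App (ren f a) (ren f b).
Proof. rewrite (term_unfold_eq (ren f (App a b))). reflexivity. Qed.

Lemma subst_var k N n : subst k N (Var n) =
  if n <? k then Var n else if n =? k then N else Var (pred n).
Proof.
  rewrite (term_unfold_eq (subst k N (Var n))). simpl.
  destruct (n <? k); [reflexivity|].
  destruct (n =? k); [symmetry; apply term_unfold_eq | reflexivity].
Qed.

Lemma subst_lam k N b : subst k N (Lam b) = Lam (subst (S k) (ren S N) b).
Proof. rewrite (term_unfold_eq (subst k N (Lam b))). reflexivity. Qed.

Lemma subst_app k N a b : subst k N (App a b) = App (subst k N a) (subst k N b).
Proof. rewrite (term_unfold_eq (subst k N (App a b))). reflexivity. Qed.

Inductive bisimF (R : term -> term -> Prop) : term -> term -> Prop :=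
| bf_var n : bisimF R (Var n) (Var n)
| bf_lam t t' : R t t' -> bisimF R (Lam t) (Lam t')
| bf_app t u t' u' : R t t' -> R u u' -> bisimF R (App t u) (App t' u').

Lemma bisim_coind (R : term -> term -> Prop) :
  (forall a b, R a b -> bisimF R a b) -> forall a b, R a b -> bisim a b.
Proof.
  intros H. cofix CIH. intros a b Hab. destruct (H a b Hab).
  - constructor.
  - constructor. apply CIH; assumption.
  - constructor; apply CIH; assumption.
Qed.

Lemma bisimF_bisim (R : term -> term -> Prop) a b :
  bisim a b -> bisimF (fun x y => R x y \/ bisim x y) a b.
Proof. intros Hb; destruct Hb; constructor; right; assumption. Qed.

Lemma bisim_coind_upto (R : term -> term -> Prop) :
  (forall a b, R a b -> bisimF (fun x y => R x y \/ bisim x y) a b) ->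
  forall a b, R a b -> bisim a b.
Proof.
  intros H a b Hab.
  apply (bisim_coind (fun x y => R x y \/ bisim x y)); [|left; assumption].
  intros x y [Hr|Hb]; [apply H | apply bisimF_bisim]; assumption.
Qed.

Lemma bisim_refl t : bisim t t.
Proof.
  apply (bisim_coind eq); [|reflexivity].
  intros a b ->. destruct b; constructor; reflexivity.
Qed.

Lemma bisim_sym a b : bisim a b -> bisim b a.
Proof.
  apply (bisim_coind (fun x y => bisim y x)).
  intros x y H. destruct H; constructor; assumption.
Qed.

Lemma bisim_trans a b c : bisim a b -> bisim b c -> bisim a c.
Proof.
  intros H1 H2.
  apply (bisim_coind (fun x z => exists y, bisim x y /\ bisim y z)); [|eauto].
  intros x z [y [Hxy Hyz]]. destruct Hxy; inversion Hyz; subst; constructor; eauto.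
Qed.

Lemma ren_bisim f a b : bisim a b -> bisim (ren f a) (ren f b).
Proof.
  intros H.
  apply (bisim_coind (fun x y => exists f a b, bisim a b /\ x = ren f a /\ y = ren f b));
    [|eauto 6].
  intros x y [g [a' [b' [Hb [-> ->]]]]]. destruct Hb.
  - rewrite !ren_var. constructor.
  - rewrite !ren_lam. constructor. eauto 6.
  - rewrite !ren_app. constructor; eauto 6.
Qed.

Lemma ren_comp f g h t : (forall n, h n = f (g n)) ->
  bisim (ren f (ren g t)) (ren h t).
Proof.
  intros Hfg.
  apply (bisim_coind (fun x y => exists f g h t, (forall n, h n = f (g n)) /\
           x = ren f (ren g t) /\ y = ren h t)); [|eauto 7].
  clear. intros x y [f [g [h [t [Hfg [-> ->]]]]]]. destruct t.
  - rewrite !ren_var, Hfg. constructor.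
  - rewrite !ren_lam. constructor. exists (up f), (up g), (up h), t.
    split; [intros [|n]; simpl; [reflexivity | now rewrite Hfg] | split; reflexivity].
  - rewrite !ren_app. constructor; eauto 7.
Qed.

Fixpoint upn (k : nat) (f : nat -> nat) : nat -> nat :=
  match k with 0 => f | S k => up (upn k f) end.

Lemma upn_lt k f n : n < k -> upn k f n = n.
Proof.
  revert n; induction k as [|k IH]; intros [|n] H; simpl; try lia; try reflexivity.
  rewrite IH; lia.
Qed.

Lemma upn_add k f j : upn k f (k + j) = k + f j.
Proof. induction k; simpl; auto. Qed.

Lemma upn_up k f : upn k (up f) = up (upn k f).
Proof. induction k as [|k IH]; simpl; [|rewrite IH]; reflexivity. Qed.

Lemma ren_shift_upn k f N N' : bisim N' (ren (upn k f) N) ->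
  bisim (ren S N') (ren (upn (S k) f) (ren S N)).
Proof.
  intros H. eapply bisim_trans; [apply ren_bisim, H|].
  eapply bisim_trans; [apply (ren_comp _ _ (fun n => S (upn k f n))); reflexivity|].
  apply bisim_sym, ren_comp. reflexivity.
Qed.

Lemma ren_subst k f N N' t : bisim N' (ren (upn k f) N) ->
  bisim (ren (upn k f) (subst k N t)) (subst k N' (ren (upn (S k) f) t)).
Proof.
  intros H.
  apply (bisim_coind_upto (fun x y => exists k f N N' t, bisim N' (ren (upn k f) N) /\
     x = ren (upn k f) (subst k N t) /\ y = subst k N' (ren (upn (S k) f) t)));
    [|eauto 10].
  clear. intros x y [k [f [N [N' [t [HN [-> ->]]]]]]]. destruct t as [n|b|a b].
  - rewrite ren_var, !subst_var.
    destruct (lt_eq_lt_dec n k) as [[Hlt|Heq]|Hgt].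
    + replace (n <? k) with true by (symmetry; apply Nat.ltb_lt; lia).
      rewrite ren_var, !upn_lt by lia.
      replace (n <? k) with true by (symmetry; apply Nat.ltb_lt; lia). constructor.
    + subst n. rewrite Nat.ltb_irrefl, Nat.eqb_refl, upn_lt, Nat.ltb_irrefl, Nat.eqb_refl by lia.
      apply bisimF_bisim, bisim_sym, HN.
    + destruct n as [|p]; [lia|].
      replace (S p <? k) with false by (symmetry; apply Nat.ltb_ge; lia).
      replace (S p =? k) with false by (symmetry; apply Nat.eqb_neq; lia).
      rewrite ren_var. simpl upn. simpl pred. unfold up at 1.
      replace p with (k + (p - k)) by lia. rewrite upn_add.
      replace (S (k + f (p - k)) <? k) with false by (symmetry; apply Nat.ltb_ge; lia).
      replace (S (k + f (p - k)) =? k) with false by (symmetry; apply Nat.eqb_neq; lia).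
      constructor.
  - rewrite subst_lam, !ren_lam, subst_lam. constructor. left.
    exists (S k), f, (ren S N), (ren S N'), b.
    split; [apply ren_shift_upn, HN | split; reflexivity].
  - rewrite subst_app, !ren_app, subst_app. constructor; left; eauto 10.
Qed.

Lemma red_step a b : bstep a b -> red_star a b.
Proof. intros; apply rt_step; left; assumption. Qed.

Lemma red_bisim a b : bisim a b -> red_star a b.
Proof. intros; apply rt_step; right; assumption. Qed.

Lemma red_star_lift (F : term -> term) :
  (forall a b, bstep a b -> red_star (F a) (F b)) ->
  (forall a b, bisim a b -> bisim (F a) (F b)) ->
  forall a b, red_star a b -> red_star (F a) (F b).
Proof.
  intros Hstep Hbis a b H. induction H as [a b [Hs|Hb]| |].
  - apply Hstep; assumption.
  - apply red_bisim, Hbis; assumption.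
  - apply rt_refl.
  - eapply rt_trans; eassumption.
Qed.

Lemma red_lam a b : red_star a b -> red_star (Lam a) (Lam b).
Proof.
  apply red_star_lift; intros; [apply red_step | ]; constructor; assumption.
Qed.

Lemma red_appl c a b : red_star a b -> red_star (App a c) (App b c).
Proof.
  apply (red_star_lift (fun x => App x c)); intros;
    [apply red_step | ]; constructor; auto using bisim_refl.
Qed.

Lemma red_appr c a b : red_star a b -> red_star (App c a) (App c b).
Proof.
  apply (red_star_lift (fun x => App c x)); intros;
    [apply red_step | ]; constructor; auto using bisim_refl.
Qed.

Lemma red_apps Ns : forall a b, red_star a b -> red_star (apps a Ns) (apps b Ns).
Proof.
  induction Ns as [|N Ns IH]; intros a b H; simpl; [assumption|].
  apply IH, red_appl, H.
Qed.

Lemma ren_bstep f a b : bstep a b -> red_star (ren f a) (ren f b).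
Proof.
  intros H; revert f; induction H as [M N| | |]; intros f.
  - rewrite ren_app, ren_lam. eapply rt_trans; [apply red_step, b_beta|].
    apply red_bisim, bisim_sym, (ren_subst 0 f N (ren f N)), bisim_refl.
  - rewrite !ren_lam. apply red_lam; auto.
  - rewrite !ren_app. apply red_appl; auto.
  - rewrite !ren_app. apply red_appr; auto.
Qed.

Lemma red_ren f a b : red_star a b -> red_star (ren f a) (ren f b).
Proof.
  apply red_star_lift; intros; [apply ren_bstep | apply ren_bisim]; assumption.
Qed.

Lemma hred_red a b : hred_star a b -> red_star a b.
Proof.
  assert (Hh : forall a b, hstep a b -> bstep a b).
  { intros x y H; induction H; constructor; assumption. }
  intros H. induction H as [a b [Hs|Hb]| |].
  - apply red_step, Hh, Hs.
  - apply red_bisim, Hb.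
  - apply rt_refl.
  - eapply rt_trans; eassumption.
Qed.

(** * Solving head normal forms *)

Definition lamn (n : nat) (t : term) : term := Nat.iter n Lam t.

Definition eraser (n : nat) : term := lamn n ident.

Lemma ren_eraser n f : ren f (eraser n) = eraser n.
Proof.
  revert f; unfold eraser, ident; induction n as [|n IH]; intros f; simpl.
  - rewrite ren_lam, ren_var. reflexivity.
  - rewrite ren_lam. f_equal. apply IH.
Qed.

Lemma subst_eraser n k X : subst k X (eraser n) = eraser n.
Proof.
  revert k X; unfold eraser, ident; induction n as [|n IH]; intros k X; simpl.
  - rewrite subst_lam, subst_var. reflexivity.
  - rewrite subst_lam. f_equal. apply IH.
Qed.

Lemma finite_eraser n : finite_term (eraser n).
Proof. unfold eraser, ident; induction n; simpl; repeat constructor; assumption. Qed.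

Lemma ren_lamn m f t : ren f (lamn m t) = lamn m (ren (upn m f) t).
Proof.
  revert f t; induction m as [|m IH]; intros f t; simpl; [reflexivity|].
  rewrite ren_lam, IH, upn_up. reflexivity.
Qed.

Lemma subst_lamn_eraser n j k t :
  subst k (eraser n) (lamn j t) = lamn j (subst (j + k) (eraser n) t).
Proof.
  revert k t; induction j as [|j IH]; intros k t; simpl; [reflexivity|].
  rewrite subst_lam, ren_eraser, IH, Nat.add_succ_r. reflexivity.
Qed.

Lemma ren_apps f Qs h : ren f (apps h Qs) = apps (ren f h) (map (ren f) Qs).
Proof.
  revert h; induction Qs as [|Q Qs IH]; intros h; simpl; [|rewrite IH, ren_app];
    reflexivity.
Qed.

Lemma subst_apps k X Qs h :
  subst k X (apps h Qs) = apps (subst k X h) (map (subst k X) Qs).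
Proof.
  revert h; induction Qs as [|Q Qs IH]; intros h; simpl; [|rewrite IH, subst_app];
    reflexivity.
Qed.

Lemma head_var_apps H : head_var H -> exists y Qs, H = apps (Var y) Qs.
Proof.
  induction 1 as [n|t u _ [y [Qs ->]]]; [exists n, []; reflexivity|].
  exists y, (Qs ++ [u]). unfold apps. rewrite fold_left_app. reflexivity.
Qed.

Lemma hnf_lamn_apps N : hnf N -> exists m y Qs, N = lamn m (apps (Var y) Qs).
Proof.
  induction 1 as [t Ht|t _ [m [y [Qs ->]]]].
  - destruct (head_var_apps _ Ht) as [y [Qs ->]]. exists 0, y, Qs; reflexivity.
  - exists (S m), y, Qs; reflexivity.
Qed.

Lemma red_eraser_apps Qs : red_star (apps (eraser (length Qs)) Qs) ident.
Proof.
  induction Qs as [|Q Qs IH]; simpl; [apply rt_refl|].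
  eapply rt_trans; [|apply IH]. apply red_apps, red_step.
  pose proof (b_beta (eraser (length Qs)) Q) as Hbeta.
  rewrite subst_eraser in Hbeta. exact Hbeta.
Qed.

Lemma red_lamn_erasers n m hd Qs :
  (hd = eraser n \/ exists y, y < m /\ hd = Var y) ->
  exists Qs', length Qs' = length Qs /\
    red_star (apps (lamn m (apps hd Qs)) (repeat (eraser n) m)) (apps (eraser n) Qs').
Proof.
  revert hd Qs; induction m as [|m IH]; intros hd Qs Hhd.
  - destruct Hhd as [->|[y [Hy _]]]; [|lia]. exists Qs; split; [reflexivity|apply rt_refl].
  - set (hd' := subst m (eraser n) hd).
    assert (Hhd' : hd' = eraser n \/ exists y, y < m /\ hd' = Var y).
    { unfold hd'. destruct Hhd as [->|[y [Hy ->]]]; [left; apply subst_eraser|].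
      rewrite subst_var. destruct (Nat.ltb_spec y m); [right; eauto|].
      replace y with m by lia. rewrite Nat.eqb_refl. left; reflexivity. }
    destruct (IH hd' (map (subst m (eraser n)) Qs) Hhd') as [Qs' [Hlen Hred]].
    exists Qs'. split; [rewrite Hlen, length_map; reflexivity|].
    eapply rt_trans; [|apply Hred]. simpl. apply red_apps, red_step.
    pose proof (b_beta (lamn m (apps hd Qs)) (eraser n)) as Hbeta.
    rewrite subst_lamn_eraser, Nat.add_0_r, subst_apps in Hbeta. exact Hbeta.
Qed.

Lemma lamn_bound_head_solvable m y Qs : y < m ->
  red_star (apps (lamn m (apps (Var y) Qs)) (repeat (eraser (length Qs)) m)) ident.
Proof.
  intros Hy.
  destruct (red_lamn_erasers (length Qs) m (Var y) Qs) as [Qs' [Hlen Hred]]; [eauto|].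
  eapply rt_trans; [apply Hred|]. rewrite <- Hlen. apply red_eraser_apps.
Qed.

Lemma hn_solvable_fin M : head_normalisable M -> solvable_fin M.
Proof.
  intros [N [Hred Hhnf]]. apply hred_red in Hred.
  destruct (hnf_lamn_apps N Hhnf) as [m [y [Qs ->]]].
  assert (Hfin : forall k, Forall finite_term (repeat (eraser (length Qs)) k)).
  { intros k. apply Forall_forall. intros x Hx.
    apply repeat_spec in Hx. subst. apply finite_eraser. }
  destruct (Nat.ltb_spec y m) as [Hy|Hy].
  - exists [], (repeat (eraser (length Qs)) m). split; [apply Hfin|].
    eapply rt_trans; [apply red_apps, Hred|]. apply lamn_bound_head_solvable, Hy.
  - (* abstracting the free head variable makes it the outermost binder *)
    set (f := fun n => if n =? y - m then 0 else S n).
    exists [y - m], (repeat (eraser (length Qs)) (S m)). split; [apply Hfin|].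
    eapply rt_trans; [apply red_apps, red_lam, red_ren, Hred|].
    assert (Hhead : upn m f y = m).
    { replace y with (m + (y - m)) by lia. rewrite upn_add.
      unfold f. rewrite Nat.eqb_refl. lia. }
    pose proof (lamn_bound_head_solvable (S m) m (map (ren (upn m f)) Qs)) as Hsol.
    rewrite length_map in Hsol. simpl abs_list. unfold abs; fold f.
    rewrite ren_lamn, ren_apps, ren_var, Hhead. apply Hsol; lia.
Qed.

Lemma inf_red_ident X : inf_red X ident -> red_star X ident.
Proof.
  intros [R [HR HX]]. apply HR in HX. unfold ident in HX.
  inversion HX as [|? P P' Hred Hbody|]; subst.
  inversion Hbody as [? x Hvar| |]; subst.
  eapply rt_trans; [apply Hred | apply red_lam, Hvar].
Qed.

Lemma red_inf_red_ident X : red_star X ident -> inf_red X ident.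
Proof.
  intros H. exists (fun a b => b = ident /\ red_star a b). split; [|auto].
  intros a b [-> Hab]. unfold ident in *.
  eapply i_lam; [apply Hab | apply i_var, rt_refl].
Qed.

Lemma finite_in001 t : finite_term t -> in001 t.
Proof.
  intros H. exists finite_term. split; [|assumption].
  intros u Hu. induction Hu; constructor; assumption.
Qed.

Lemma solvable_fin_001 M : solvable_fin M -> solvable_001 M.
Proof.
  intros [xs [Ns [Hfin Hred]]]. exists xs, Ns. split.
  - eapply Forall_impl; [apply finite_in001 | apply Hfin].
  - apply red_inf_red_ident, Hred.
Qed.

(** * Non-idempotent intersection types *)

Inductive ty : Type := Star | Arr (ms : list ty) (A : ty).

Fixpoint ty_eq_dec (a b : ty) {struct a} : {a = b} + {a <> b}.
Proof.
  refine (match a, b with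
          | Star, Star => left eq_refl
          | Arr ms A, Arr ns B =>
              match list_eq_dec ty_eq_dec ms ns, ty_eq_dec A B with
              | left _, left _ => left _
              | _, _ => right _
              end
          | _, _ => right _
          end); congruence.
Defined.

Definition cnt (A : ty) (l : list ty) : nat := count_occ ty_eq_dec l A.

Lemma cnt_app A l1 l2 : cnt A (l1 ++ l2) = cnt A l1 + cnt A l2.
Proof. apply count_occ_app. Qed.

Lemma cnt_nil A : cnt A [] = 0.
Proof. reflexivity. Qed.

Lemma cnt_cons A B l : cnt A (B :: l) = (if ty_eq_dec B A then 1 else 0) + cnt A l.
Proof. unfold cnt; simpl. destruct (ty_eq_dec B A); reflexivity. Qed.

(* Contexts assign a multiset (list up to permutation) of types to each de
   Bruijn index; inclusion and sum of multisets are read through [cnt]. *)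
Definition ctx := nat -> list ty.
Definition subm (l1 l2 : list ty) := forall A, cnt A l1 <= cnt A l2.
Definition cle (G D : ctx) := forall n A, cnt A (G n) <= cnt A (D n).
Definition cplus (G D : ctx) : ctx := fun n => G n ++ D n.
Definition ccons (ms : list ty) (G : ctx) : ctx :=
  fun n => match n with 0 => ms | S k => G k end.
Definition cempty : ctx := fun _ => [].
Definition remove (k : nat) (G : ctx) : ctx :=
  fun n => if n <? k then G n else G (S n).

Ltac cle_lia :=
  let n := fresh "n" in let B := fresh "B" in
  intros n B;
  repeat match goal with H : cle _ _ |- _ => specialize (H n B) end;
  unfold cplus, cempty in *; simpl in *; rewrite ?cnt_app, ?cnt_nil in *; lia.

Lemma cle_refl G : cle G G.
Proof. cle_lia. Qed.

Lemma cle_trans G D E : cle G D -> cle D E -> cle G E.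
Proof. intros. cle_lia. Qed.

(* [typ G t A s]: t has type A in G by a derivation of size s;
   [typs G u ms s]: u has every type of the multiset ms, the contexts of the
   separate derivations being summed. *)
Inductive typ : ctx -> term -> ty -> nat -> Prop :=
| T_var G n A : subm [A] (G n) -> typ G (Var n) A 1
| T_lam G t ms A s : typ (ccons ms G) t A s -> typ G (Lam t) (Arr ms A) (S s)
| T_app G G1 G2 t u ms A s ss : typ G1 t (Arr ms A) s -> typs G2 u ms ss ->
    cle (cplus G1 G2) G -> typ G (App t u) A (S (s + ss))
with typs : ctx -> term -> list ty -> nat -> Prop :=
| Ts_nil G u : typs G u [] 0
| Ts_cons G G1 G2 u B ms s ss : typ G1 u B s -> typs G2 u ms ss ->
    cle (cplus G1 G2) G -> typs G u (B :: ms) (s + ss).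

Scheme typ_mind := Induction for typ Sort Prop
with typs_mind := Induction for typs Sort Prop.
Combined Scheme typ_typs_ind from typ_mind, typs_mind.

Lemma typ_weaken_mut :
  (forall G t A s, typ G t A s -> forall D, cle G D -> typ D t A s) /\
  (forall G t ms s, typs G t ms s -> forall D, cle G D -> typs D t ms s).
Proof.
  apply typ_typs_ind; intros.
  - constructor. intros B. specialize (s B). specialize (H n B). lia.
  - constructor. apply H. intros [|n] B; simpl; auto.
  - econstructor; eauto. eapply cle_trans; eauto.
  - constructor.
  - econstructor; eauto. eapply cle_trans; eauto.
Qed.

Lemma typ_weaken G t A s D : typ G t A s -> cle G D -> typ D t A s.
Proof. intros; eapply (proj1 typ_weaken_mut); eassumption. Qed.

Lemma typs_weaken G t ms s D : typs G t ms s -> cle G D -> typs D t ms s.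
Proof. intros; eapply (proj2 typ_weaken_mut); eassumption. Qed.

Lemma typ_bisim_mut :
  (forall G t A s, typ G t A s -> forall t', bisim t t' -> typ G t' A s) /\
  (forall G t ms s, typs G t ms s -> forall t', bisim t t' -> typs G t' ms s).
Proof.
  apply typ_typs_ind; intros.
  - inversion H; subst. constructor; assumption.
  - inversion H0; subst. constructor; auto.
  - inversion H1; subst. econstructor; eauto.
  - constructor.
  - econstructor; eauto.
Qed.

(* For a renaming f with partial left inverse g, the context G becomes G o g
   (empty outside the range of f). *)
Definition ctx_comap (g : nat -> option nat) (D : ctx) : ctx :=
  fun m => match g m with Some n => D n | None => [] end.

Definition upo (g : nat -> option nat) : nat -> option nat :=
  fun m => match m with 0 => Some 0 | S m => option_map S (g m) end.

Lemma typ_ren_mut :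
  (forall G t A s, typ G t A s -> forall f g, (forall n, g (f n) = Some n) ->
     typ (ctx_comap g G) (ren f t) A s) /\
  (forall G t ms s, typs G t ms s -> forall f g, (forall n, g (f n) = Some n) ->
     typs (ctx_comap g G) (ren f t) ms s).
Proof.
  unfold ctx_comap; apply typ_typs_ind; intros.
  - rewrite ren_var. constructor. simpl. rewrite H. assumption.
  - rewrite ren_lam. constructor.
    eapply typ_weaken; [apply (H (up f) (upo g)); intros [|n]; simpl; rewrite ?H0; auto|].
    intros [|m] B; simpl; [lia|]. destruct (g m); simpl; lia.
  - rewrite ren_app. econstructor; eauto.
    intros m B0. unfold cplus. destruct (g m); [apply c | simpl; lia].
  - constructor.
  - econstructor; eauto.
    intros m B0. unfold cplus. destruct (g m); [apply c | simpl; lia].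
Qed.

Lemma typs_shift D N ms ss : typs D N ms ss -> typs (ccons [] D) (ren S N) ms ss.
Proof.
  intros H.
  pose (unshift := fun m => match m with 0 => None | S n => Some n end).
  eapply typs_weaken; [apply ((proj2 typ_ren_mut) _ _ _ _ H S unshift); reflexivity|].
  intros [|m] B; unfold ctx_comap; simpl; lia.
Qed.

Ltac ren_inv :=
  match goal with Heq : _ = ren ?f ?t |- _ =>
    destruct t; [rewrite ren_var in Heq| rewrite ren_lam in Heq| rewrite ren_app in Heq];
    inversion Heq; subst; clear Heq end.

Lemma typ_ren_inv_mut :
  (forall G u A s, typ G u A s -> forall f t, u = ren f t ->
     typ (fun n => G (f n)) t A s) /\
  (forall G u ms s, typs G u ms s -> forall f t, u = ren f t ->
     typs (fun n => G (f n)) t ms s).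
Proof.
  apply typ_typs_ind.
  - intros G n A Hs f t Heq. ren_inv. constructor; assumption.
  - intros G t ms A s Ht IH f t' Heq. ren_inv.
    constructor. eapply typ_weaken; [apply (IH (up f) t'); reflexivity|].
    intros [|m] B; simpl; lia.
  - intros G G1 G2 t u ms A s ss Ht IH1 Hu IH2 Hc f t' Heq. ren_inv.
    econstructor; [apply IH1; reflexivity | apply IH2; reflexivity | intros m B; apply Hc].
  - intros; constructor.
  - intros G G1 G2 u B ms s ss Ht IH1 Hu IH2 Hc f t Heq.
    econstructor; [apply IH1, Heq | apply IH2, Heq | intros m B0; apply Hc].
Qed.

Lemma typs_app N l1 l2 D1 D2 s1 s2 : typs D1 N l1 s1 -> typs D2 N l2 s2 ->
  typs (cplus D1 D2) N (l1 ++ l2) (s1 + s2).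
Proof.
  revert D1 s1; induction l1 as [|A l1 IH]; intros D1 s1 H1 H2.
  - inversion H1; subst. simpl. eapply typs_weaken; [eassumption | cle_lia].
  - inversion H1 as [|G G1 G0 u B ms0 s ss0 Ht Hs Hc]; subst. simpl.
    rewrite <- Nat.add_assoc. apply (Ts_cons _ G1 (cplus G0 D2)); auto. cle_lia.
Qed.

Lemma typs_app_inv N l1 l2 D ss : typs D N (l1 ++ l2) ss ->
  exists D1 D2 s1 s2, typs D1 N l1 s1 /\ typs D2 N l2 s2 /\
    cle (cplus D1 D2) D /\ s1 + s2 = ss.
Proof.
  revert D ss; induction l1 as [|A l1 IH]; intros D ss H.
  - exists cempty, D, 0, ss. repeat split; [constructor | assumption | cle_lia].
  - inversion H as [|G G1 G2 u B ms0 s ss0 Ht Hs Hc]; subst.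
    destruct (IH G2 ss0 Hs) as [D1 [D2 [s1 [s2 [H1 [H2 [H3 H4]]]]]]].
    exists (cplus G1 D1), D2, (s + s1), s2.
    repeat split; [econstructor; [eassumption..|apply cle_refl] | assumption | cle_lia | lia].
Qed.

Lemma typs_pick N ms D ss A : typs D N ms ss -> In A ms ->
  exists D1 D2 s1 s2 ms', typ D1 N A s1 /\ typs D2 N ms' s2 /\
    (forall B, cnt B ms = cnt B (A :: ms')) /\ cle (cplus D1 D2) D /\ s1 + s2 = ss.
Proof.
  revert D ss; induction ms as [|C ms IH]; intros D ss H Hin; [destruct Hin|].
  inversion H as [|G G1 G2 u B ms0 s ss0 Ht Hs Hc]; subst.
  destruct Hin as [<-|Hin].
  - exists G1, G2, s, ss0, ms. repeat split; auto.
  - destruct (IH G2 ss0 Hs Hin) as [D1 [D2 [s1 [s2 [ms' [H1 [H2 [H3 [H4 H5]]]]]]]]].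
    exists D1, (cplus G1 D2), s1, (s + s2), (C :: ms').
    repeat split; [assumption | econstructor; [eassumption..|apply cle_refl]
                  | intros B; rewrite !cnt_cons, H3, cnt_cons; lia | cle_lia | lia].
Qed.

Lemma typs_submset N ms1 ms D ss : subm ms1 ms -> typs D N ms ss ->
  exists D1 D2 s1 s2 rest, typs D1 N ms1 s1 /\ typs D2 N rest s2 /\
    cle (cplus D1 D2) D /\ s1 + s2 = ss.
Proof.
  revert ms D ss; induction ms1 as [|A ms1 IH]; intros ms D ss Hsub H.
  - exists cempty, D, 0, ss, ms. repeat split; [constructor | assumption | cle_lia].
  - assert (Hin : In A ms).
    { apply (count_occ_In ty_eq_dec). specialize (Hsub A).
      unfold cnt in Hsub. simpl in Hsub. destruct (ty_eq_dec A A); [lia | congruence]. }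
    destruct (typs_pick N ms D ss A H Hin)
      as [D1 [D2 [s1 [s2 [ms' [H1 [H2 [H3 [H4 H5]]]]]]]]].
    assert (Hsub' : subm ms1 ms').
    { intros B. specialize (Hsub B). rewrite H3, !cnt_cons in Hsub. lia. }
    destruct (IH ms' D2 s2 Hsub' H2) as [E1 [E2 [t1 [t2 [rest [G1 [G2 [G3 G4]]]]]]]].
    exists (cplus D1 E1), E2, (s1 + t1), t2, rest.
    repeat split; [econstructor; [eassumption..|apply cle_refl] | assumption | cle_lia | lia].
Qed.

Lemma typs_split N ms D ss ms1 ms2 : typs D N ms ss -> subm (ms1 ++ ms2) ms ->
  exists D1 D2 s1 s2, typs D1 N ms1 s1 /\ typs D2 N ms2 s2 /\
    cle (cplus D1 D2) D /\ s1 + s2 <= ss.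
Proof.
  intros H Hs.
  destruct (typs_submset N (ms1 ++ ms2) ms D ss Hs H)
    as [E1 [E2 [t1 [t2 [rest [G1 [G2 [G3 G4]]]]]]]].
  destruct (typs_app_inv N ms1 ms2 E1 t1 G1) as [D1 [D2 [s1 [s2 [H1 [H2 [H3 H4]]]]]]].
  exists D1, D2, s1, s2. repeat split; [assumption | assumption | cle_lia | lia].
Qed.

Lemma typs_one D N A ss : typs D N [A] ss ->
  exists D' s, typ D' N A s /\ cle D' D /\ s <= ss.
Proof.
  intros H. inversion H as [|G G1 G2 u B ms0 s ss0 Ht Hs Hc]; subst.
  exists G1, s. repeat split; [assumption | cle_lia | lia].
Qed.

Lemma cle_remove k G D : cle G D -> cle (remove k G) (remove k D).
Proof. intros H n B. unfold remove. destruct (n <? k); apply H. Qed.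

Lemma cplus_remove k G D n : remove k (cplus G D) n = cplus (remove k G) (remove k D) n.
Proof. unfold remove, cplus. destruct (n <? k); reflexivity. Qed.

Lemma remove_cplus_cle k G1 G2 G D1 D2 D :
  cle (cplus G1 G2) G -> cle (cplus D1 D2) D ->
  cle (cplus (cplus (remove k G1) D1) (cplus (remove k G2) D2)) (cplus (remove k G) D).
Proof.
  intros H1 H2 n B. pose proof (cle_remove k _ _ H1 n B) as H.
  rewrite cplus_remove in H. specialize (H2 n B).
  unfold cplus in *. rewrite !cnt_app in *. lia.
Qed.

Lemma typ_subst_var G n A k N D ss : subm [A] (G n) -> typs D N (G k) ss ->
  exists s', s' <= 1 + ss /\ typ (cplus (remove k G) D) (subst k N (Var n)) A s'.
Proof.
  intros Hs HN. rewrite subst_var.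
  destruct (lt_eq_lt_dec n k) as [[Hlt|Heq]|Hgt].
  - replace (n <? k) with true by (symmetry; apply Nat.ltb_lt; lia).
    exists 1. split; [lia|]. constructor. intros B. specialize (Hs B).
    unfold cplus, remove. replace (n <? k) with true by (symmetry; apply Nat.ltb_lt; lia).
    rewrite cnt_app. lia.
  - subst n. rewrite Nat.ltb_irrefl, Nat.eqb_refl.
    destruct (typs_split _ _ _ _ [A] [] HN Hs) as [D1 [D2 [s1 [s2 [H1 [_ [H3 H4]]]]]]].
    destruct (typs_one _ _ _ _ H1) as [D' [s' [Ht [Hc Hle]]]].
    exists s'. split; [lia|]. eapply typ_weaken; [eassumption | cle_lia].
  - replace (n <? k) with false by (symmetry; apply Nat.ltb_ge; lia).
    replace (n =? k) with false by (symmetry; apply Nat.eqb_neq; lia).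
    exists 1. split; [lia|]. constructor. intros B. specialize (Hs B).
    unfold cplus, remove.
    replace (pred n <? k) with false by (symmetry; apply Nat.ltb_ge; lia).
    replace (S (pred n)) with n by lia. rewrite cnt_app. lia.
Qed.

(* Substitution consumes the derivations typing N, one per occurrence of k. *)
Lemma typ_subst_mut :
  (forall G t A s, typ G t A s -> forall k N D ss, typs D N (G k) ss ->
     exists s', s' <= s + ss /\ typ (cplus (remove k G) D) (subst k N t) A s') /\
  (forall G t ms s, typs G t ms s -> forall k N D ss, typs D N (G k) ss ->
     exists s', s' <= s + ss /\ typs (cplus (remove k G) D) (subst k N t) ms s').
Proof.
  apply typ_typs_ind.
  - intros G n A Hs k N D ss HN. apply typ_subst_var; assumption.
  - intros G t ms A s Ht IH k N D ss HN. rewrite subst_lam.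
    destruct (IH (S k) (ren S N) (ccons [] D) ss (typs_shift _ _ _ _ HN)) as [s' [Hle Ht']].
    exists (S s'). split; [lia|]. constructor. eapply typ_weaken; [eassumption|].
    intros [|m] B; unfold cplus, remove, ccons; simpl; [rewrite cnt_app; simpl; lia|].
    change (S m <? S k) with (m <? k). destruct (m <? k); rewrite !cnt_app; lia.
  - intros G G1 G2 t u ms A s ss Ht IH1 Hu IH2 Hc k N D ss' HN. rewrite subst_app.
    destruct (typs_split _ _ _ _ _ _ HN (fun B => Hc k B))
      as [D1 [D2 [s1 [s2 [H1 [H2 [H3 H4]]]]]]].
    destruct (IH1 k N D1 s1 H1) as [t1 [L1 T1]].
    destruct (IH2 k N D2 s2 H2) as [t2 [L2 T2]].
    exists (S (t1 + t2)). split; [lia|].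
    econstructor; [eassumption.. | apply remove_cplus_cle; assumption].
  - intros G u k N D ss HN. exists 0. split; [lia | constructor].
  - intros G G1 G2 u B ms s ss Ht IH1 Hu IH2 Hc k N D ss' HN.
    destruct (typs_split _ _ _ _ _ _ HN (fun B => Hc k B))
      as [D1 [D2 [s1 [s2 [H1 [H2 [H3 H4]]]]]]].
    destruct (IH1 k N D1 s1 H1) as [t1 [L1 T1]].
    destruct (IH2 k N D2 s2 H2) as [t2 [L2 T2]].
    exists (t1 + t2). split; [lia|].
    econstructor; [eassumption.. | apply remove_cplus_cle; assumption].
Qed.

Definition insert_empty (k : nat) (G : ctx) : ctx :=
  fun m => if m <? k then G m else if m =? k then [] else G (pred m).

Definition single (k : nat) (ms : list ty) : ctx := fun m => if m =? k then ms else [].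

Lemma remove_insert_empty k G n : remove k (insert_empty k G) n = G n.
Proof.
  unfold remove, insert_empty. destruct (Nat.ltb_spec n k); [reflexivity|].
  destruct (Nat.ltb_spec (S n) k); [lia|]. destruct (Nat.eqb_spec (S n) k); [lia|].
  reflexivity.
Qed.

Lemma remove_single k ms n : remove k (single k ms) n = [].
Proof.
  unfold remove, single. destruct (Nat.ltb_spec n k).
  - destruct (Nat.eqb_spec n k); [lia | reflexivity].
  - destruct (Nat.eqb_spec (S n) k); [lia | reflexivity].
Qed.

(* The contexts G from which [subst k N t] can be typed in G' by
   reconstructing derivations for t (in G, satisfying P) and N. *)
Definition subst_inv (G' : ctx) (k : nat) (N : term) (P : ctx -> Prop) :=
  exists G ms D ss, P G /\ typs D N ms ss /\ G k = ms /\
    cle (cplus (remove k G) D) G'.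

Lemma typ_subst_var_inv G' k N n A s : typ G' (subst k N (Var n)) A s ->
  subst_inv G' k N (fun G => exists s0, typ G (Var n) A s0).
Proof.
  rewrite subst_var. destruct (Nat.eqb_spec n k) as [->|Hne]; intros H.
  - rewrite Nat.ltb_irrefl in H.
    exists (single k [A]), [A], G', (s + 0). split; [|split; [|split]].
    + exists 1. constructor. unfold single. rewrite Nat.eqb_refl. intros B; lia.
    + apply (Ts_cons _ G' cempty); [assumption | apply Ts_nil | cle_lia].
    + unfold single. rewrite Nat.eqb_refl. reflexivity.
    + intros m B. unfold cplus. rewrite remove_single. simpl. lia.
  - exists (insert_empty k G'), [], cempty, 0. split; [|split; [|split]].
    + exists 1. constructor. unfold insert_empty.
      destruct (Nat.ltb_spec n k); [|destruct (Nat.eqb_spec n k); [lia|]];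
        inversion H; subst; assumption.
    + constructor.
    + unfold insert_empty. rewrite Nat.ltb_irrefl, Nat.eqb_refl. reflexivity.
    + intros m B. unfold cplus, cempty. rewrite remove_insert_empty, app_nil_r. lia.
Qed.

Lemma subst_inv_merge G1 G2 G' k N (P1 P2 Q : ctx -> Prop) :
  (forall Ga Gb, P1 Ga -> P2 Gb -> Q (cplus Ga Gb)) ->
  subst_inv G1 k N P1 -> subst_inv G2 k N P2 -> cle (cplus G1 G2) G' ->
  subst_inv G' k N Q.
Proof.
  intros HQ [Ga [msa [Da [ssa [A1 [A2 [A3 A4]]]]]]] [Gb [msb [Db [ssb [B1 [B2 [B3 B4]]]]]]] Hc.
  exists (cplus Ga Gb), (msa ++ msb), (cplus Da Db), (ssa + ssb).
  split; [|split; [|split]].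
  - apply HQ; assumption.
  - apply typs_app; assumption.
  - unfold cplus. rewrite A3, B3. reflexivity.
  - intros m B. specialize (A4 m B). specialize (B4 m B). specialize (Hc m B).
    unfold cplus, remove in *. destruct (m <? k); rewrite !cnt_app in *; lia.
Qed.

Ltac subst_var_case :=
  match goal with Heq : ?u = subst ?k ?N (Var ?n) |- _ =>
    eapply typ_subst_var_inv; rewrite <- Heq; econstructor; eassumption end.

Lemma typ_subst_inv_mut :
  (forall G' u A s, typ G' u A s -> forall k N t, u = subst k N t ->
     subst_inv G' k N (fun G => exists s0, typ G t A s0)) /\
  (forall G' u ms s, typs G' u ms s -> forall k N t, u = subst k N t ->
     subst_inv G' k N (fun G => exists s0, typs G t ms s0)).
Proof.
  apply typ_typs_ind.
  - intros G' n A Hs k N [n'|b|a b] Heq;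
      [subst_var_case | rewrite subst_lam in Heq | rewrite subst_app in Heq]; discriminate.
  - intros G' t ms A s Ht IH k N [n'|b|a b] Heq;
      [subst_var_case | rewrite subst_lam in Heq | rewrite subst_app in Heq; discriminate].
    injection Heq as ->.
    destruct (IH (S k) (ren S N) b eq_refl)
      as [G0 [ms0 [D0 [ss0 [[s0 H1] [H2 [H3 H4]]]]]]].
    exists (fun m => G0 (S m)), ms0, (fun m => D0 (S m)), ss0. split; [|split; [|split]].
    + exists (S s0). constructor. eapply typ_weaken; [eassumption|].
      intros [|m] B; simpl; [|lia]. specialize (H4 0 B).
      unfold cplus, remove in H4. simpl in H4. rewrite cnt_app in H4. lia.
    + exact ((proj2 typ_ren_inv_mut) _ _ _ _ H2 S N eq_refl).
    + assumption.
    + intros m B. apply (H4 (S m) B).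
  - intros G' G1 G2 t u ms A s ss Ht IH1 Hu IH2 Hc k N [n'|b|a b] Heq;
      [subst_var_case | rewrite subst_lam in Heq; discriminate | rewrite subst_app in Heq].
    injection Heq as -> ->.
    eapply subst_inv_merge; [|apply IH1 | apply IH2 | apply Hc]; try reflexivity.
    intros Ga Gb [sa Ha] [sb Hb]. eexists. econstructor; [eassumption.. | apply cle_refl].
  - intros G u k N t _. exists cempty, [], cempty, 0.
    split; [exists 0; apply Ts_nil | split; [apply Ts_nil | split; [reflexivity|]]].
    intros m B. unfold cplus, remove, cempty. destruct (m <? k); simpl; lia.
  - intros G' G1 G2 u B ms s ss Ht IH1 Hu IH2 Hc k N t Heq.
    eapply subst_inv_merge; [|apply IH1, Heq | apply IH2, Heq | apply Hc].
    intros Ga Gb [sa Ha] [sb Hb]. eexists. econstructor; [eassumption.. | apply cle_refl].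
Qed.

Lemma typ_head_step G t A s : typ G t A s ->
  hnf t \/ exists t' s', hstep t t' /\ typ G t' A s' /\ s' < s.
Proof.
  induction 1 as [G n A Hs|G t ms A s Ht IH|G G1 G2 t u ms A s ss Ht IH Hu Hc].
  - left. repeat constructor.
  - destruct IH as [Hn|[t' [s' [H1 [H2 H3]]]]]; [left; apply hnf_lam, Hn|].
    right. exists (Lam t'), (S s'). split; [constructor | split; [constructor|lia]]; assumption.
  - destruct t as [n|b|a c].
    + left. repeat constructor.
    + inversion Ht as [|G0 t0 ms0 A0 s0 Hb|]; subst.
      destruct ((proj1 typ_subst_mut) _ _ _ _ Hb 0 u G2 ss Hu) as [s' [Hle Ht']].
      right. exists (subst 0 u b), s'. split; [constructor | split; [|lia]].
      eapply typ_weaken; [exact Ht'|]. intros n B. specialize (Hc n B).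
      unfold cplus, remove, ccons in *. simpl. exact Hc.
    + destruct IH as [Hn|[t' [s' [H1 [H2 H3]]]]].
      * left. inversion Hn; subst. constructor. constructor; assumption.
      * right. exists (App t' u), (S (s' + ss)).
        split; [constructor; [assumption | intros b0; discriminate] |].
        split; [econstructor; eassumption | lia].
Qed.

Lemma typ_head_normalisable G t A s : typ G t A s -> head_normalisable t.
Proof.
  revert G t A; induction s as [s IH] using (well_founded_induction lt_wf).
  intros G t A H.
  destruct (typ_head_step G t A s H) as [Hn|[t' [s' [H1 [H2 H3]]]]].
  - exists t. split; [apply rt_refl | assumption].
  - destruct (IH s' H3 G t' A H2) as [N [HN1 HN2]]. exists N. split; [|assumption].
    eapply rt_trans; [apply rt_step; left; eassumption | assumption].
Qed.

Lemma typ_expand_bstep a b : bstep a b ->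
  forall G A s, typ G b A s -> exists s', typ G a A s'.
Proof.
  induction 1 as [M N|M M' Hst IH|M M' N Hst IH|M N N' Hst IH]; intros G A s Hty.
  - destruct ((proj1 typ_subst_inv_mut) _ _ _ _ Hty 0 N M eq_refl)
      as [G0 [ms [D [ss [[s0 H1] [H2 [H3 H4]]]]]]].
    exists (S (S s0 + ss)). apply (T_app _ (remove 0 G0) D (Lam M) N ms).
    + constructor. eapply typ_weaken; [exact H1|].
      intros [|n] B; unfold ccons, remove; simpl; [rewrite H3|]; lia.
    + exact H2.
    + exact H4.
  - inversion Hty as [|G0 t0 ms0 A0 s0 Hb|]; subst.
    destruct (IH _ _ _ Hb) as [s' Hs']. exists (S s'). constructor; assumption.
  - inversion Hty as [| |G0 G1 G2 t0 u0 ms0 A0 s0 ss0 Ht Hu Hc]; subst.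
    destruct (IH _ _ _ Ht) as [s' Hs']. eexists. econstructor; eassumption.
  - inversion Hty as [| |G0 G1 G2 t0 u0 ms0 A0 s0 ss0 Ht Hu Hc]; subst.
    assert (Hus : forall ms D ss, typs D N' ms ss -> exists ss', typs D N ms ss').
    { induction ms as [|C ms IHms]; intros D ss' Hs; [exists 0; apply Ts_nil|].
      inversion Hs as [|D0 D1 D2 u C0 ms0' s1 ss1 Ht1 Hs1 Hc1]; subst.
      destruct (IH _ _ _ Ht1) as [s2 Hs2]. destruct (IHms _ _ Hs1) as [ss2 Hss2].
      eexists. econstructor; eassumption. }
    destruct (Hus _ _ _ Hu) as [ss' Hs']. eexists. econstructor; eassumption.
Qed.

Lemma typ_expand_red a b : red_star a b ->
  forall G A s, typ G b A s -> exists s', typ G a A s'.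
Proof.
  induction 1 as [a b [Hs|Hb]|a|a b c Hab IH1 Hbc IH2]; intros G A s Hty.
  - eapply typ_expand_bstep; eassumption.
  - exists s. eapply (proj1 typ_bisim_mut); [eassumption | apply bisim_sym, Hb].
  - exists s. assumption.
  - destruct (IH2 _ _ _ Hty) as [s' H']. eapply IH1, H'.
Qed.

Lemma typ_apps_inv Ns M G A s : typ G (apps M Ns) A s ->
  exists G' B s', typ G' M B s'.
Proof.
  revert M G A s; induction Ns as [|N Ns IH]; intros M G A s H; simpl in H; [eauto|].
  destruct (IH _ _ _ _ H) as [G' [B [s' H']]]. inversion H'; subst. eauto.
Qed.

Lemma typ_abs_list_inv xs M G A s : typ G (abs_list xs M) A s ->
  exists G' B s', typ G' M B s'.
Proof.
  revert M G A s; induction xs as [|x xs IH]; intros M G A s H; simpl in H; [eauto|].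
  unfold abs in H. inversion H as [|G0 t0 ms0 A0 s0 Hb|]; subst.
  eapply IH, ((proj1 typ_ren_inv_mut) _ _ _ _ Hb _ _ eq_refl).
Qed.

Lemma typ_ident : typ cempty ident (Arr [Star] Star) 2.
Proof. do 2 constructor. intros B; simpl; lia. Qed.

Lemma red_ident_head_normalisable xs Ns M :
  red_star (apps (abs_list xs M) Ns) ident -> head_normalisable M.
Proof.
  intros H. destruct (typ_expand_red _ _ H _ _ _ typ_ident) as [s Hs].
  destruct (typ_apps_inv _ _ _ _ _ Hs) as [G1 [B1 [s1 H1]]].
  destruct (typ_abs_list_inv _ _ _ _ _ H1) as [G2 [B2 [s2 H2]]].
  eapply typ_head_normalisable; eassumption.
Qed.

Theorem mainTheorem11 (M : term) (HM : in001 M) :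
  (solvable_001 M <-> head_normalisable M) /\
  (head_normalisable M <-> solvable_fin M).
Proof.
  assert (Hfin : solvable_fin M -> head_normalisable M).
  { intros [xs [Ns [_ Hred]]]. eapply red_ident_head_normalisable, Hred. }
  split; split.
  - intros [xs [Ns [_ Hinf]]].
    eapply red_ident_head_normalisable, inf_red_ident, Hinf.
  - intros Hhn. apply solvable_fin_001, hn_solvable_fin, Hhn.
  - apply hn_solvable_fin.
  - exact Hfin.
Qed.
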